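(* Let $n=2^k$ with $k\ge 2$ an integer. If an $n\times n$ matrix $\Sigma$ with entries $\pm1$ has vanishing permanent, then the number $\mu(\Sigma)$ of entries of $\Sigma$ equal to $-1$ is even.
   Context: The permanent of $\Sigma=[\sigma_{ij}]$ is $\sum_{\lambda\in\mathrm{Sym}(n)}\sigma_{1,\lambda(1)}\cdots\sigma_{n,\lambda(n)}$. *)

From mathcomp Require Import all_boot all_order all_algebra all_fingroup.
Set Implicit Arguments. Unset Strict Implicit. Unset Printing Implicit Defensive.
Import GRing.Theory Num.Theory.
Local Open Scope ring_scope.

Definition permanent (R : comRingType) (n : nat) (A : 'M[R]_n) : R :=
  \sum_(s : 'S_n) \prod_(i < n) A i (s i).

Definition mu (R : ringType) (n : nat) (A : 'M[R]_n) : nat :=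
  #|[set ij : 'I_n * 'I_n | A ij.1 ij.2 == -1]|.

From mathcomp Require Import all_boot all_order all_algebra all_fingroup.
From mathcomp Require Import zify ring.
Set Implicit Arguments. Unset Strict Implicit. Unset Printing Implicit Defensive.
Import GRing.Theory Num.Theory.

(* Write Sigma = 1 - 2 B, where B is the 0/1 indicator of the entries -1.
   Expanding the permanent over the set J of rows where -2 B is chosen gives
   per Sigma = \sum_J (-2)^|J| \sum_s \prod_(i in J) B i (s i), and the inner
   sum is divisible by (n - |J|)!, since it is invariant under the permutations
   fixing J pointwise.  By Legendre's formula v_2(m!) = m - s_2(m), so
   2^(n-k+1) divides 2^|J| (n - |J|)! except when |J| = 1, and the terms with
   |J| = 1 add up to -2 (n-1)! mu(Sigma), whose 2-adic valuation is
   n - k + v_2(mu(Sigma)).  Hence per Sigma = 0 forces mu(Sigma) to be even. *)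

Lemma logn2_fact_double a : logn 2 (a.*2)`! = a + logn 2 a`!.
Proof.
elim: a => // a IH.
rewrite doubleS !factS lognM ?muln_gt0 ?fact_gt0 //.
rewrite logn_Gauss ?coprime2n /= ?odd_double // IH -doubleS -muln2.
by rewrite !lognM ?fact_gt0 // (_ : logn 2 2 = 1) //; lia.
Qed.

Lemma logn2_fact m : logn 2 m`! = m./2 + logn 2 (m./2)`!.
Proof.
rewrite -logn2_fact_double -{1}(odd_double_half m).
case: (odd m) => //=.
by rewrite add1n factS logn_Gauss // coprime2n /= odd_double.
Qed.

Lemma logn2_fact_pow k : logn 2 (2 ^ k)`! = (2 ^ k).-1.
Proof.
elim: k => // k IH.
rewrite expnS mul2n logn2_fact_double IH; have := expn_gt0 2 k; lia.
Qed.

Lemma leq_logn2_fact k m : m < 2 ^ k -> m <= logn 2 m`! + k.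
Proof.
elim: k m => [|k IH] m; first by case: m.
rewrite expnS logn2_fact => lt_m.
have := IH m./2; have := odd_double_half m; lia.
Qed.

Lemma ltn_logn2_fact k m : m.+1 < 2 ^ k -> m < logn 2 m`! + k.
Proof.
elim: k m => [|k IH] m; first by case: m.
rewrite expnS logn2_fact => lt_m.
have := odd_double_half m; case: (odd m) => /= def_m.
  have := IH m./2; lia.
have := @leq_logn2_fact k m./2; lia.
Qed.

Lemma dvdn_pow2_fact k m : 2 <= k -> m <= 2 ^ k -> m != 1 ->
  2 ^ (2 ^ k - k).+1 %| 2 ^ m * (2 ^ k - m)`!.
Proof.
move=> k_ge2 le_m_n m_neq1; have := ltn_expl k (ltnSn 1).
rewrite pfactor_dvdn ?muln_gt0 ?expn_gt0 ?fact_gt0 // lognM ?expn_gt0 ?fact_gt0 //.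
rewrite pfactorK //; case: m le_m_n m_neq1 => [|[|m]] // le_m_n _ lt_k_n.
  by rewrite subn0 logn2_fact_pow; lia.
have := @ltn_logn2_fact k (2 ^ k - m.+2); lia.
Qed.

Lemma odd_dvdn_pow2_fact k m : 2 ^ (2 ^ k - k).+1 %| 2 * (2 ^ k).-1`! * m ->
  ~~ odd m.
Proof.
apply: contraL => odd_m; have n_gt0 : 0 < 2 ^ k by rewrite expn_gt0.
have lognF : k + logn 2 (2 ^ k).-1`! = (2 ^ k).-1.
  have := logn2_fact_pow k; have := factS (2 ^ k).-1; rewrite prednK // => ->.
  by rewrite lognM ?expn_gt0 ?fact_gt0 // pfactorK // => <-.
have logn_m : logn 2 m = 0 by rewrite logn_coprime ?coprime2n.
have m_gt0 : 0 < m by rewrite odd_gt0.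
rewrite pfactor_dvdn ?muln_gt0 ?fact_gt0 // !lognM ?muln_gt0 ?fact_gt0 //.
rewrite logn_m (_ : logn 2 2 = 1) //; lia.
Qed.

Local Open Scope ring_scope.

Lemma permanent_addr1_expand (R : comNzRingType) n (A : 'M[R]_n) (c : 'I_n -> 'I_n -> R) :
    (forall i j, A i j = c i j + 1) ->
  permanent A = \sum_(J : {set 'I_n}) \sum_(s : 'S_n) \prod_(i in J) c i (s i).
Proof.
move=> A_def; rewrite /permanent.
under eq_bigr => s _ do rewrite (eq_bigr _ (fun i _ => A_def i (s i))) bigA_distr.
rewrite exchange_big /=; apply: eq_bigr => J _; apply: eq_bigr => s _.
by rewrite [RHS]big_mkcond.
Qed.

Lemma card_perm_sends n (i j : 'I_n) : #|[set s : 'S_n | s i == j]| = n.-1`!.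
Proof.
have -> : [set s : 'S_n | s i == j] = (fun s => s * tperm i j)%g @: Sym (~: [set i]).
  apply/setP => s; rewrite inE; apply/eqP/imsetP => [s_ij | [t]].
    exists (s * tperm i j)%g; last by rewrite -mulgA tperm2 mulg1.
    rewrite inE; apply/subsetP => x; rewrite !inE /= permM.
    by apply: contraNneq => ->; rewrite s_ij tpermR.
  by rewrite inE => /out_perm t_i ->; rewrite permM t_i ?tpermL // !inE eqxx.
by rewrite card_imset ?card_Sym ?cardsC1 ?card_ord //; exact: mulIg.
Qed.

Lemma sum_perm_image (V : nmodType) n (i : 'I_n) (g : 'I_n -> V) :
  \sum_(s : 'S_n) g (s i) = (\sum_j g j) *+ n.-1`!.
Proof.
rewrite (partition_big (fun s : 'S_n => s i) xpredT) //= -sumrMnl.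
apply: eq_bigr => j _; rewrite -(card_perm_sends i j) -sumr_const.
by apply: eq_big => s; rewrite ?inE // => /eqP ->.
Qed.

Lemma sum_perm_prod_card1 (R : comPzSemiRingType) n (c : 'I_n -> 'I_n -> R) :
  \sum_(J : {set 'I_n} | #|J| == 1%N) \sum_(s : 'S_n) \prod_(i in J) c i (s i) =
  (\sum_i \sum_j c i j) *+ n.-1`!.
Proof.
rewrite big_cards1 -sumrMnl; apply: eq_bigr => i _.
by under eq_bigr => s _ do rewrite big_set1; rewrite sum_perm_image.
Qed.

Lemma card_dvdz_sum_rcoset_invariant (gT : finGroupType) (H : {group gT})
    (f : gT -> int) :
  (forall h x, h \in H -> f (h * x)%g = f x) -> (#|H|%:Z %| \sum_x f x)%Z.
Proof.
move=> f_inv; rewrite (partition_big_imset (fun x => H :* x)%g) /=.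
apply: rpred_sum => _ /imsetP[y _ ->].
rewrite (eq_bigl (mem (H :* y)%g)) => [|x]; last by apply/eqP/rcoset_eqP.
rewrite -rcosetE big_imset /= => [|a b _ _]; last exact: mulIg.
rewrite (eq_bigr (fun _ => f y)) => [|h h_H]; last exact: f_inv.
by rewrite sumr_const -mulr_natr natz dvdz_mull.
Qed.

Lemma dvdz_sum_perm_prod n (J : {set 'I_n}) (b : 'I_n -> 'I_n -> int) :
  ((n - #|J|)`!%:Z %| \sum_(s : 'S_n) \prod_(i in J) b i (s i))%Z.
Proof.
have := @card_dvdz_sum_rcoset_invariant _ (Sym_group (~: J))
  (fun s => \prod_(i in J) b i (s i)).
rewrite card_Sym cardsCs card_ord setCK; apply => h s; rewrite inE => /out_perm h_J.
by apply: eq_bigr => i i_J; rewrite permM h_J // inE i_J.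
Qed.

Lemma pow2_dvdz_sum_perm_prod k (J : {set 'I_(2 ^ k)})
    (b : 'I_(2 ^ k) -> 'I_(2 ^ k) -> int) :
  (2 <= k)%N -> #|J| != 1%N ->
  ((2 ^ (2 ^ k - k).+1)%N%:Z %|
     \sum_(s : 'S_(2 ^ k)) \prod_(i in J) (-2 * b i (s i)))%Z.
Proof.
move=> k_ge2 J_neq1.
have le_J_n : (#|J| <= 2 ^ k)%N by rewrite -[X in (_ <= X)%N]card_ord max_card.
under eq_bigr => s _ do rewrite big_split /= prodr_const.
rewrite -mulr_sumr; have /dvdzP[q ->] := dvdz_sum_perm_prod J b.
have -> : (-2) ^+ #|J| * (q * (2 ^ k - #|J|)`!%:Z) =
    ((-1) ^+ #|J| * q) * (2 ^ #|J| * (2 ^ k - #|J|)`!)%N%:Z.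
  by rewrite PoszM -!natz natrX -mulN1r exprMn; ring.
exact/dvdz_mull/dvdn_pow2_fact.
Qed.

Lemma mu_sum (R : nzRingType) n (A : 'M[R]_n) :
  mu A = (\sum_i \sum_j (A i j == (-1)%R))%N.
Proof.
rewrite /mu pair_big /= -sum1_card big_mkcond /=.
by apply: eq_bigr => ij _; rewrite inE; case: (_ == _).
Qed.

Theorem proposition3p5 (k : nat) (hk : (2 <= k)%N) (Sigma : 'M[int]_(2 ^ k))
  (hpm : forall i j, Sigma i j = 1 \/ Sigma i j = -1)
  (hper : permanent Sigma = 0) :
  ~~ odd (mu Sigma).
Proof.
pose b i j : int := (Sigma i j == -1)%:R.
have Sigma_def i j : Sigma i j = -2 * b i j + 1 by rewrite /b; case: (hpm i j) => ->.
have sum_c : \sum_i \sum_j -2 * b i j = - (2 * mu Sigma)%N%:Z.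
  rewrite mu_sum PoszM -!natz natr_sum mulr_sumr -sumrN; apply: eq_bigr => i _.
  by rewrite natr_sum mulr_sumr -sumrN; apply: eq_bigr => j _; rewrite mulNr.
move: hper; rewrite (permanent_addr1_expand Sigma_def).
rewrite (bigID (fun J : {set 'I_(2 ^ k)} => #|J| == 1%N)) /=.
rewrite (sum_perm_prod_card1 (fun i j => -2 * b i j)) sum_c mulNrn.
move=> /eqP; rewrite addr_eq0 eqr_opp => /eqP hper.
apply: (@odd_dvdn_pow2_fact k).
suff : ((2 ^ (2 ^ k - k).+1)%N%:Z %| (2 * (2 ^ k).-1`! * mu Sigma)%N%:Z)%Z by [].
have -> : (2 * (2 ^ k).-1`! * mu Sigma)%N%:Z = (2 * mu Sigma)%N%:Z *+ (2 ^ k).-1`!.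
  by rewrite -[RHS]mulr_natr natz -PoszM mulnAC.
rewrite hper; apply: rpred_sum => J J_neq1.
exact: pow2_dvdz_sum_perm_prod.
Qed.
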